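(* For $k\ge0$ let $\mathcal R^{(N,k)}(x)=\mathcal R^{(N+k-1)}(x)\cdots\mathcal R^{(N)}(x)$ (with $\mathcal R^{(N,0)}=\mathrm{Id}$) and $D_k^{(N)}(x)=\mathcal R^{(N,k)}(x)^{-1}\mathcal D^{(N+k)}(x)\mathcal R^{(N,k)}(x)$, so that $W_1^{(N+k)}(x.E)={\rm Tr}\,D_k^{(N)}(x)M^{(N)}(x.E)$. Then there exist polynomials $\alpha_k^{(N)}(x)\in\mathbb C[x]$, $k=0,\dots,\dim\mathfrak g$, not all zero and independent of $E$, such that $\sum_k\alpha_k^{(N)}D_k^{(N)}=0$ and for every $E\in\mathfrak g$ $$\sum_{k=0}^{\dim\mathfrak g}\alpha_k^{(N)}(x)W_1^{(N+k)}(x.E)=0 .$$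
   Context: Let $G\subset GL(r,\mathbb C)$ be a complex reductive Lie group given in a faithful matrix representation, with Lie algebra $\mathfrak g\subset\mathfrak{gl}(r,\mathbb C)$; ${\rm Tr}$ is the matrix trace. For each integer $N$ let $\mathcal D^{(N)}(x)\in\mathfrak g$ be rational in $x$, let $\Psi^{(N)}(x)$ be an invertible $G$-valued solution of $\frac{d}{dx}\Psi^{(N)}=\mathcal D^{(N)}\Psi^{(N)}$ (on a common simply connected domain avoiding all poles), and assume $\Psi^{(N+1)}(x)=\mathcal R^{(N)}(x)\Psi^{(N)}(x)$ with $\mathcal R^{(N)}(x)$ an invertible matrix, rational in $x$, with rational inverse. For $E\in\mathfrak g$, $M^{(N)}(x.E)=\Psi^{(N)}(x)E\Psi^{(N)}(x)^{-1}$ and $W_1^{(N)}(x.E)={\rm Tr}\,\mathcal D^{(N)}(x)M^{(N)}(x.E)$. *)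

From mathcomp Require Import all_boot all_order all_algebra.
From mathcomp Require Import all_classical all_reals all_analysis.
From mathcomp Require Import complex.
Import Order.TTheory GRing.Theory Num.Theory numFieldNormedType.Exports.

Set Implicit Arguments.
Unset Strict Implicit.
Unset Printing Implicit Defensive.

Local Open Scope ring_scope.
Local Open Scope classical_set_scope.

Definition rational_mx_on (K : fieldType) (m n : nat) (U : set K)
    (f : K -> 'M[K]_(m, n)) : Prop :=
  exists (P : 'M[{poly K}]_(m, n)) (q : {poly K}),
    q != 0 /\
    forall x, U x -> q.[x] != 0 /\ f x = q.[x]^-1 *: map_mx (fun p => p.[x]) P.

Definition matrix_group (K : fieldType) (r : nat) (G : set 'M[K]_r) : Prop :=
  (forall A, G A -> A \in unitmx) /\
  G 1%:M /\
  (forall A B, G A -> G B -> G (A *m B)) /\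
  (forall A, G A -> G (invmx A)).

(* X is a tangent vector at the identity of the matrix group G: the complex
   derivative at 0 of a holomorphic-at-0 curve gamma with gamma(0) = 1 and
   gamma(t) in G for t near 0.  The Lie algebra of G is the set of these. *)
Definition lie_tangent (R : realType) (r : nat) (G : set 'M[R[i]]_r)
    (X : 'M[R[i]]_r) : Prop :=
  exists gamma : (R[i])^o -> 'M[R[i]]_r,
    gamma 0 = 1%:M /\
    (\forall t \near (0 : (R[i])^o), G (gamma t)) /\
    is_derive (0 : (R[i])^o) (1 : R[i]) gamma X.

Fixpoint Rprod (K : ringType) (r : nat) (Rf : int -> K -> 'M[K]_r)
    (N : int) (k : nat) (x : K) : 'M[K]_r :=
  match k with
  | 0%N => 1%:M
  | k'.+1 => Rf (N + k'%:Z) x *m Rprod Rf N k' x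
  end.

Definition Dk (K : comUnitRingType) (r : nat) (D Rf : int -> K -> 'M[K]_r)
    (N : int) (k : nat) (x : K) : 'M[K]_r :=
  invmx (Rprod Rf N k x) *m D (N + k%:Z) x *m Rprod Rf N k x.

Definition Mfun (K : comUnitRingType) (r : nat) (Psi : int -> K -> 'M[K]_r)
    (N : int) (E : 'M[K]_r) (x : K) : 'M[K]_r :=
  Psi N x *m E *m invmx (Psi N x).

Definition W1 (K : comUnitRingType) (r : nat) (D Psi : int -> K -> 'M[K]_r)
    (N : int) (E : 'M[K]_r) (x : K) : K :=
  \tr (D N x *m Mfun Psi N E x).

(* The conjugates D_k^(N) = R^(N,k)^-1 D^(N+k) R^(N,k) stay in g, because
   R^(N,k) = Psi^(N+k) (Psi^(N))^-1 lies in G and g is stable under conjugation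
   by G.  So D_0^(N), ..., D_(dim g)^(N) are dim g + 1 rational functions with
   values in a space of dimension dim g.  Written over a common denominator they
   are polynomial vectors whose values on the infinite set U lie in g, hence
   over the field C(x) they span a space of dimension at most dim g and satisfy
   a nontrivial linear relation; clearing denominators gives polynomial
   coefficients.  The relation for the W_1 follows by linearity of the trace,
   as W_1^(N+k)(x.E) = Tr D_k^(N)(x) M^(N)(x.E). *)

From mathcomp Require Import all_boot all_order all_algebra finmap.
From mathcomp Require Import all_classical all_reals all_analysis.
From mathcomp Require Import complex.
Import Order.TTheory GRing.Theory Num.Theory numFieldNormedType.Exports.
Set Implicit Arguments.
Unset Strict Implicit.
Unset Printing Implicit Defensive.
Local Open Scope ring_scope.
Local Open Scope classical_set_scope.
Import VectorInternalTheory.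

Section FractionRows.
Variable Rd : idomainType.
Local Notation tofrac := (@tofrac Rd).

Lemma frac_clear_denom (x : {fraction Rd}) :
  exists2 d : Rd, d != 0 & exists a : Rd, tofrac a = tofrac d * x.
Proof.
set y := repr x; exists (frac y).2; first exact: denom_ratioP.
exists (frac y).1; rewrite -[x]reprK -/y mulrC.
unlock tofrac; rewrite !piE; apply/eqmodP.
rewrite /= FracField.equivfE /FracField.mulf /=.
by rewrite !numden_Ratio ?mulf_neq0 ?oner_neq0 ?denom_ratioP // mulr1 mul1r.
Qed.

Lemma row_clear_denom n (v : 'rV[{fraction Rd}]_n) :
  exists2 d : Rd, d != 0 &
    exists w : 'rV[Rd]_n, map_mx tofrac w = tofrac d *: v.
Proof.
have /choice [da hda] : forall j, exists da : Rd * Rd,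
    da.1 != 0 /\ tofrac da.2 = tofrac da.1 * v 0 j.
  by move=> j; have [d d0 [a ha]] := frac_clear_denom (v 0 j); exists (d, a).
pose d j := (da j).1; pose a j := (da j).2.
have d0 j : d j != 0 by case: (hda j).
have ha j : tofrac (a j) = tofrac (d j) * v 0 j by case: (hda j).
exists (\prod_j d j).
  by rewrite prodf_seq_neq0; apply/allP => j _; apply/implyP.
exists (\row_j (a j * \prod_(i | i != j) d i)); apply/rowP => j.
by rewrite !mxE [in RHS](bigD1 j) //= !tofracM ha mulrAC.
Qed.

Lemma map_tofrac_inj m n : injective (map_mx tofrac : 'M[Rd]_(m, n) -> _).
Proof.
move=> A B /matrixP eqAB; apply/matrixP => i j.
by move: (eqAB i j); rewrite !mxE => /eqP; rewrite tofrac_eq => /eqP.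
Qed.

Lemma frac_rank_row_dependent k m (A : 'M[Rd]_(k, m)) :
  (\rank (map_mx tofrac A) < k)%N ->
  exists2 beta : 'rV[Rd]_k, beta != 0 & beta *m A = 0.
Proof.
move=> rkA; pose v := nz_row (kermx (map_mx tofrac A)).
have v0 : v != 0 by rewrite nz_row_eq0 kermx_eq0 /row_free neq_ltn rkA.
have vA : v *m map_mx tofrac A = 0 by apply/sub_kermxP/nz_row_sub.
have [d d0 [w wv]] := row_clear_denom v.
exists w.
  rewrite -(inj_eq (@map_tofrac_inj 1 k)) map_mx0 wv.
  by rewrite scaler_eq0 tofrac_eq0 negb_or d0.
by apply: map_tofrac_inj; rewrite map_mxM wv -scalemxAl vA scaler0 map_mx0.
Qed.
End FractionRows.

Lemma poly_rows_dependent (K : fieldType) k m s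
    (A : 'M[{poly K}]_(k, m)) (S : 'M[K]_(s, m)) :
  A *m map_mx polyC (cokermx S) = 0 -> (\rank S < k)%N ->
  exists2 beta : 'rV_k, beta != 0 & beta *m A = 0.
Proof.
move=> AS rkS; apply: frac_rank_row_dependent; apply: leq_ltn_trans rkS.
have : (map_mx (@tofrac _) A <= map_mx (@tofrac _ \o polyC) S)%MS.
  by rewrite submxE -map_cokermx (map_mx_comp polyC) -map_mxM AS map_mx0.
by move/mxrankS; rewrite mxrank_map.
Qed.

Lemma poly_eq0_on_infinite (K : fieldType) (U : set K) (p : {poly K}) :
  infinite_set U -> (forall x, U x -> p.[x] = 0) -> p = 0.
Proof.
move=> /(infinite_set_fset (size p)) [B BU szB] p0.
apply: (roots_geq_poly_eq0 (rs := B)) => //.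
- by apply/allP => x xB; apply/rootP/p0/BU.
- exact: fset_uniq.
Qed.

Lemma polymx_eq0_on_infinite (K : fieldType) (U : set K) m n
    (P : 'M[{poly K}]_(m, n)) :
  infinite_set U -> (forall x, U x -> map_mx (horner_eval x) P = 0) -> P = 0.
Proof.
move=> Uinf P0; apply/matrixP => i j; rewrite [RHS]mxE.
apply: (poly_eq0_on_infinite Uinf) => x Ux.
by have /matrixP/(_ i j) := P0 x Ux; rewrite !mxE.
Qed.

Lemma open_nonempty_infinite (K : numFieldType) (U : set K^o) :
  open U -> U !=set0 -> infinite_set U.
Proof.
move=> oU [x0 Ux0].
have /nbhs_ballP [e e0 x0eU] : nbhs x0 U by exact: open_nbhs_nbhs.
pose f i : K := x0 + e / i.+2%:R.
apply/infiniteP/pcard_leP/injfunPex; exists f.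
  move=> i _; apply: x0eU; rewrite /ball /= /f opprD addNKr normrN ger0_norm.
    by rewrite ltr_pdivrMr // ltr_pMr // ltr1n.
  by rewrite divr_ge0 // ltW.
move=> i j _ _ /addrI /(mulfI (lt0r_neq0 e0)) /invr_inj /eqP.
by rewrite eqr_nat eqSS eqSS => /eqP.
Qed.

Lemma map_mx_horner_polyC (K : fieldType) m n x (M : 'M[K]_(m, n)) :
  map_mx (horner_eval x) (map_mx polyC M) = M.
Proof. by apply/matrixP => i j; rewrite !mxE horner_evalE hornerC. Qed.

Section PolyMatrixCoordinates.
Variables (K : fieldType) (m n : nat).

(* v2r only applies to K-matrices; its polynomial counterpart goes through
   the constant matrix of the linear map v2r \o vec_mx. *)
Definition v2r_poly (P : 'M[{poly K}]_(m, n)) :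
    'rV[{poly K}]_(dim 'M[K]_(m, n)) :=
  mxvec P *m map_mx polyC (lin1_mx (v2r \o vec_mx)).

Lemma v2r_poly_horner x P :
  map_mx (horner_eval x) (v2r_poly P) = v2r (map_mx (horner_eval x) P).
Proof.
by rewrite map_mxM map_mxvec map_mx_horner_polyC mul_rV_lin1 /= mxvecK.
Qed.

Lemma memv_v2r (V : {vspace 'M[K]_(m, n)}) M :
  (M \in V) = (v2r M <= vs2mx V)%MS.
Proof. by rewrite memvE /subsetv /vline mx2vsK. Qed.

End PolyMatrixCoordinates.

Lemma rational_mx_dependent (K : fieldType) m n (U : set K)
    (V : {vspace 'M[K]_(m, n)}) (F : nat -> K -> 'M[K]_(m, n)) :
  infinite_set U -> (forall k, rational_mx_on U (F k)) ->
  (forall k x, U x -> F k x \in V) ->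
  exists alpha : 'I_(\dim V).+1 -> {poly K},
    (exists k, alpha k != 0) /\
    forall x, U x -> \sum_k (alpha k).[x] *: F k x = 0.
Proof.
move=> Uinf Frat FV.
have /choice [Pq hPq] : forall k : 'I_(\dim V).+1,
    exists Pq : 'M[{poly K}]_(m, n) * {poly K}, Pq.2 != 0 /\ forall x, U x ->
      Pq.2.[x] != 0 /\ F k x = Pq.2.[x]^-1 *: map_mx (horner_eval x) Pq.1.
  by move=> k; have [P [q]] := Frat k; exists (P, q).
pose q k := (Pq k).2.
pose A := \matrix_k v2r_poly (Pq k).1.
have rowA k x :
    U x -> row k (map_mx (horner_eval x) A) = (q k).[x] *: v2r (F k x).
  move=> Ux; have [_ /(_ x Ux) [qx0 ->]] := hPq k.
  by rewrite -map_row rowK v2r_poly_horner linearZ /= scalerA mulfV ?scale1r.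
have AV : A *m map_mx polyC (cokermx (vs2mx V)) = 0.
  apply: (polymx_eq0_on_infinite Uinf) => x Ux; apply/row_matrixP => k.
  rewrite map_mxM map_mx_horner_polyC row_mul rowA // row0.
  move: (FV k x Ux); rewrite memv_v2r submxE => /eqP vV.
  by rewrite -scalemxAl vV scaler0.
have [beta beta0 betaA] := poly_rows_dependent AV (leqnn (\dim V).+1).
exists (fun k => beta 0 k * q k); split.
  have [k betak] : exists k, beta 0 k != 0.
    apply/existsP; apply: contraNT beta0 => /existsPn beta0.
    by apply/eqP/rowP => k; rewrite mxE; apply/eqP/negPn/beta0.
  by exists k; rewrite mulf_neq0 //; case: (hPq k).
move=> x Ux; apply: v2r_inj; rewrite linear_sum linear0.
have evbeta k : (beta 0 k).[x] = map_mx (horner_eval x) beta 0 k.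
  by rewrite mxE.
under eq_bigr => k _ do
  rewrite linearZ /= hornerM -scalerA -(rowA k x Ux) evbeta.
by rewrite -mulmx_sum_row -map_mxM betaA map_mx0.
Qed.

Section RationalMatrices.
Variables (K : fieldType) (U : set K).

Lemma eq_rational_mx_on m n (f g : K -> 'M[K]_(m, n)) :
  (forall x, U x -> f x = g x) -> rational_mx_on U f -> rational_mx_on U g.
Proof.
move=> fg [P [q [q0 fPq]]]; exists P, q; split => // x Ux.
by rewrite -fg //; apply: fPq.
Qed.

Lemma rational_mx_on1 n : rational_mx_on U (fun _ => 1%:M : 'M[K]_n).
Proof.
exists 1%:M, 1; split => [|x _]; first exact: oner_neq0.
rewrite hornerC invr1 scale1r oner_neq0 (map_scalar_mx (horner_eval x)) /=.
by rewrite horner_evalE hornerC.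
Qed.

Lemma rational_mx_onM m n p (f : K -> 'M[K]_(m, n)) (g : K -> 'M[K]_(n, p)) :
  rational_mx_on U f -> rational_mx_on U g ->
  rational_mx_on U (fun x => f x *m g x).
Proof.
move=> [P [q [q0 fPq]]] [P' [q' [q'0 gPq]]].
exists (P *m P'), (q * q'); split => [|x Ux]; first by rewrite mulf_neq0.
have [qx0 ->] := fPq x Ux; have [q'x0 ->] := gPq x Ux.
rewrite hornerM mulf_neq0 // -scalemxAl -scalemxAr scalerA invfM mulrC.
by rewrite (map_mxM (horner_eval x)).
Qed.

End RationalMatrices.

Lemma invmxM (K : comUnitRingType) n (A B : 'M[K]_n) :
  A \in unitmx -> B \in unitmx -> invmx (A *m B) = invmx B *m invmx A.
Proof.
move=> Au Bu; have ABu : A *m B \in unitmx by rewrite unitmx_mul Au.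
rewrite -[RHS]mul1mx -(mulVmx ABu) -!mulmxA (mulmxA B) mulmxV // mul1mx.
by rewrite mulmxV // mulmx1.
Qed.

Lemma Rprod_unit (K : comUnitRingType) r (Rf : int -> K -> 'M[K]_r) N k x :
  (forall M, Rf M x \in unitmx) -> Rprod Rf N k x \in unitmx.
Proof.
by move=> Rfu; elim: k => [|k IHk] /=; rewrite ?unitmx1 // unitmx_mul Rfu.
Qed.

Lemma Psi_Rprod (K : nzRingType) r (Psi Rf : int -> K -> 'M[K]_r) N x :
  (forall M, Psi (M + 1) x = Rf M x *m Psi M x) ->
  forall k, Psi (N + k%:Z) x = Rprod Rf N k x *m Psi N x.
Proof.
move=> Psi_step k; elim: k => [|k IHk]; first by rewrite addr0 mul1mx.
have -> : N + k.+1%:Z = N + k%:Z + 1 by rewrite -addn1 PoszD addrA.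
by rewrite Psi_step IHk mulmxA.
Qed.

Lemma W1_Dk (K : comUnitRingType) r (D Psi Rf : int -> K -> 'M[K]_r)
    N k E x :
  Psi (N + k%:Z) x = Rprod Rf N k x *m Psi N x ->
  Rprod Rf N k x \in unitmx -> Psi N x \in unitmx ->
  W1 D Psi (N + k%:Z) E x = \tr (Dk D Rf N k x *m Mfun Psi N E x).
Proof.
move=> PsiE Ru Psiu; rewrite /W1 /Mfun /Dk PsiE invmxM //.
by rewrite !mulmxA mxtrace_mulC !mulmxA.
Qed.

Section TransitionProducts.
Variables (K : fieldType) (r : nat) (U : set K) (D Rf : int -> K -> 'M[K]_r).
Hypothesis Rf_unit : forall M x, U x -> Rf M x \in unitmx.
Hypothesis Rf_rational : forall M, rational_mx_on U (Rf M).
Hypothesis invmx_Rf_rational :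
  forall M, rational_mx_on U (fun x => invmx (Rf M x)).
Hypothesis D_rational : forall M, rational_mx_on U (D M).

Lemma rational_mx_on_Rprod N k : rational_mx_on U (Rprod Rf N k).
Proof.
elim: k => [|k IHk]; first exact: rational_mx_on1.
exact: rational_mx_onM (Rf_rational _) IHk.
Qed.

Lemma rational_mx_on_invmx_Rprod N k :
  rational_mx_on U (fun x => invmx (Rprod Rf N k x)).
Proof.
elim: k => [|k IHk].
  by apply: eq_rational_mx_on (rational_mx_on1 _ _) => x _; rewrite /= invmx1.
apply: eq_rational_mx_on (rational_mx_onM IHk (invmx_Rf_rational (N + k%:Z))).
move=> x Ux /=; rewrite invmxM ?Rf_unit //.
by apply: Rprod_unit => M; apply: Rf_unit.
Qed.

Lemma rational_mx_on_Dk N k : rational_mx_on U (Dk D Rf N k).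
Proof.
apply: rational_mx_onM (rational_mx_on_Rprod N k).
exact: rational_mx_onM (rational_mx_on_invmx_Rprod N k) (D_rational _).
Qed.

End TransitionProducts.

Lemma matrix_group_cancelr (K : fieldType) r (G : set 'M[K]_r) A B :
  matrix_group G -> G B -> G (A *m B) -> G A.
Proof.
move=> [unitG [_ [mulG invG]]] GB GAB.
by rewrite -(mulmxK (unitG _ GB) A); apply: mulG => //; apply: invG.
Qed.

Lemma mulmx_lr_continuous (K : numFieldType) m n p q
    (B : 'M[K]_(m, n)) (C : 'M[K]_(p, q)) :
  continuous (fun M : 'M[K]_(n, p) => B *m M *m C).
Proof.
have -> : (fun M : 'M[K]_(n, p) => B *m M *m C) =
    fun M => \sum_i \sum_j M i j *: (B *m delta_mx i j *m C).
  apply: funext => M; rewrite {1}(matrix_sum_delta M) mulmx_sumr mulmx_suml.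
  apply: eq_bigr => i _; rewrite mulmx_sumr mulmx_suml; apply: eq_bigr => j _.
  by rewrite -scalemxAr -scalemxAl.
apply: (continuous_big add_continuous) => i _.
apply: (continuous_big add_continuous) => j _ M.
exact/continuousZr_tmp/coord_continuous.
Qed.

Lemma is_derive_mulmx_lr (K : numFieldType) (V : normedModType K) m n p q
    (B : 'M[K]_(m, n)) (C : 'M[K]_(p, q)) (f : V -> 'M[K]_(n, p)) x v df :
  is_derive x v f df -> is_derive x v (fun t => B *m f t *m C) (B *m df *m C).
Proof.
move=> [f_derivable <-].
have quotient_cvg :
    (fun h => h^-1 *: (B *m f (h *: v + x) *m C - B *m f x *m C))
    @ 0^' --> B *m 'D_v f x *m C.
  have -> : (fun h => h^-1 *: (B *m f (h *: v + x) *m C - B *m f x *m C)) =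
      (fun M => B *m M *m C) \o (fun h => h^-1 *: (f (h *: v + x) - f x)).
    by apply: funext => h /=; rewrite -mulmxBl -mulmxBr scalemxAl scalemxAr.
  by apply: continuous_cvg; [exact: mulmx_lr_continuous | exact: f_derivable].
apply: DeriveDef; first by apply/cvg_ex; exists (B *m 'D_v f x *m C).
exact: cvg_lim quotient_cvg.
Qed.

Lemma lie_tangent_conj (R : realType) r (G : set 'M[R[i]]_r)
    (A X : 'M[R[i]]_r) :
  matrix_group G -> G A -> lie_tangent G X -> lie_tangent G (invmx A *m X *m A).
Proof.
move=> [unitG [_ [mulG invG]]] GA [gamma [gamma0 [Ggamma gamma']]].
exists (fun t => invmx A *m gamma t *m A); split.
  by rewrite gamma0 mulmx1 mulVmx // unitG.
split; last exact: is_derive_mulmx_lr.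
by apply: filterS Ggamma => t Gt; apply: mulG (mulG _ _ (invG _ GA) Gt) GA.
Qed.

Theorem mainTheorem8 (R : realType) (r : nat)
  (G : set 'M[R[i]]_r) (g : {vspace 'M[R[i]]_r})
  (U : set R[i])
  (D Psi Rf : int -> R[i] -> 'M[R[i]]_r) :
  matrix_group G ->
  (forall X, X \in g <-> lie_tangent G X) ->
  open (U : set (R[i])^o) -> connected (U : set (R[i])^o) ->
  (forall N, rational_mx_on U (D N)) ->
  (forall N x, U x -> D N x \in g) ->
  (forall N x, U x -> G (Psi N x)) ->
  (forall N x, U x ->
     is_derive (x : (R[i])^o) (1 : R[i]) (Psi N) (D N x *m Psi N x)) ->
  (forall N, rational_mx_on U (Rf N)) ->
  (forall N, rational_mx_on U (fun x => invmx (Rf N x))) ->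
  (forall N x, U x -> Rf N x \in unitmx) ->
  (forall N x, U x -> Psi (N + 1) x = Rf N x *m Psi N x) ->
  forall N : int,
  exists alpha : 'I_(\dim g).+1 -> {poly R[i]},
    (exists k, alpha k != 0) /\
    (forall x, U x ->
       \sum_(k < (\dim g).+1) (alpha k).[x] *: Dk D Rf N k x = 0) /\
    (forall E, E \in g -> forall x, U x ->
       \sum_(k < (\dim g).+1) (alpha k).[x] * W1 D Psi (N + k%:Z) E x = 0).
Proof.
move=> hG hg oU _ D_rational Dg PsiG _ Rf_rational invmx_Rf_rational Rf_unit.
move=> Psi_step N.
have [U0 | /set0P Un0] := eqVneq U set0.
  by exists (fun _ => 1); rewrite U0; split; [exists ord0; exact: oner_neq0 | split].
have PsiE x k : U x -> Psi (N + k%:Z) x = Rprod Rf N k x *m Psi N x.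
  by move=> Ux; apply: Psi_Rprod => M; apply: Psi_step.
have Dk_lie k x : U x -> Dk D Rf N k x \in g.
  move=> Ux; apply/hg/lie_tangent_conj; [exact: hG | | exact/hg/Dg].
  apply: (matrix_group_cancelr hG (PsiG N x Ux)).
  by rewrite -PsiE //; apply: PsiG.
have [alpha [alpha0 alpha_Dk]] :=
  rational_mx_dependent (open_nonempty_infinite oU Un0)
    (rational_mx_on_Dk Rf_unit Rf_rational invmx_Rf_rational D_rational N)
    Dk_lie.
exists alpha; do 2!split => //; move=> E _ x Ux.
have W1E k : W1 D Psi (N + k%:Z) E x = \tr (Dk D Rf N k x *m Mfun Psi N E x).
  apply: W1_Dk; first exact: PsiE.
    by apply: Rprod_unit => M; apply: Rf_unit.
  by case: hG => unitG _; apply/unitG/PsiG.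
under eq_bigr => k _ do rewrite W1E -mxtraceZ scalemxAl.
by rewrite -raddf_sum -mulmx_suml alpha_Dk // mul0mx raddf0.
Qed.
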